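(* Let $m>0$, $\alpha>0$ and $\omega\ge 0$ with $\alpha>2\omega$, and consider the dynamical system \[ \frac{d\phi}{dt}=\gamma,\qquad \frac{d\gamma}{dt}=\frac{1}{m}\bigl(-\gamma+\omega-k\sin\phi\bigr),\qquad \frac{dk}{dt}=\alpha\cos\phi-k, \] with $(\phi,\gamma,k)\in[-\pi,\pi)\times\mathbb{R}\times\mathbb{R}$ ($\phi$ taken modulo $2\pi$). Write $\theta:=\tfrac12\arcsin\!\bigl(\tfrac{2\omega}{\alpha}\bigr)$ and consider its four equilibrium points $P_1=(\theta,0,\alpha\cos\theta)$, $P_2=(\tfrac{\pi}{2}-\theta,0,\alpha\sin\theta)$, $P_3=(-\pi+\theta,0,-\alpha\cos\theta)$, $P_4=(-\tfrac{\pi}{2}-\theta,0,-\alpha\sin\theta)$. Let $u:=\alpha+\sqrt{\alpha^2-4\omega^2}$ and $v:=\alpha-\sqrt{\alpha^2-4\omega^2}$. Then: \begin{enumerate} \item Let $\Gamma_1$ be the region in the $(u,v)$ plane with $0\le v\le u\le \frac{2(m^2-m+1)}{3m}$ that is bounded by the curves \[ v=u-\frac{\bigl(m+1+\sqrt{4(m+1)^2-6m(u+2)}\bigr)\bigl(\sqrt{4(m+1)^2-6m(u+2)}-2(m+1)\bigr)^2}{54m^2}, \] \[ v=u-\frac{\bigl(m+1-\sqrt{4(m+1)^2-6m(u+2)}\bigr)\bigl(\sqrt{4(m+1)^2-6m(u+2)}+2(m+1)\bigr)^2}{54m^2}. \] If $(u,v)\notin\Gamma_1$, then the Jacobian matrix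 of the system at the equilibria $P_1$ and $P_3$ has a negative real eigenvalue and two complex-conjugate eigenvalues with negative real part. Otherwise, the Jacobian matrix at $P_1$ and $P_3$ has three negative real eigenvalues. \item Let $\Gamma_2$ be the region in the $(u,v)$ plane with $0\le v\le u$ and $v\le \frac{2(m^2-m+1)}{3m}$ that is bounded by the curves \[ u=v-\frac{\bigl(m+1+\sqrt{4(m+1)^2-6m(v+2)}\bigr)\bigl(\sqrt{4(m+1)^2-6m(v+2)}-2(m+1)\bigr)^2}{54m^2}, \] \[ u=v-\frac{\bigl(m+1-\sqrt{4(m+1)^2-6m(v+2)}\bigr)\bigl(\sqrt{4(m+1)^2-6m(v+2)}+2(m+1)\bigr)^2}{54m^2}. \] If $(u,v)\notin\Gamma_2$, then the Jacobian matrix at the equilibria $P_2$ and $P_4$ has a positive real eigenvalue and two complex-conjugate eigenvalues with negative real part. Otherwise, the Jacobian matrix at $P_2$ and $P_4$ has one positive real eigenvalue and two negative real eigenvalues. \end{enumerate}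
   Context: This system describes the phase difference $\phi$, its derivative $\gamma$, and the (rescaled) adaptive coupling strength $k$ of two identical-mass Kuramoto oscillators with inertia and Hebbian learning; $m>0$ is the (rescaled) mass, $\alpha>0$ the learning enhancement factor, and $\omega\ge 0$ the intrinsic-frequency difference (the paper assumes $\omega\ge0$ throughout). The Jacobian matrix at an equilibrium $(\phi^*,\gamma^*,k^* )$ is the Jacobian of the vector field $(\gamma,\ \frac1m(-\gamma+\omega-k\sin\phi),\ \alpha\cos\phi-k)$ with respect to $(\phi,\gamma,k)$, evaluated at that point. *)

From HB Require Import structures.
From mathcomp Require Import all_boot all_order all_algebra.
From mathcomp Require Import reals trigo.
From mathcomp Require Import complex.
Set Implicit Arguments. Unset Strict Implicit. Unset Printing Implicit Defensive.
Import Order.TTheory GRing.Theory Num.Theory.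
Local Open Scope ring_scope.

(* Jacobian matrix of the vector field
   (phi, gamma, k) |-> (gamma, (-gamma + omega - k sin phi)/m, alpha cos phi - k)
   w.r.t. (phi, gamma, k) at (phi, gamma, k):
   row i = gradient of component i, column j = derivative w.r.t. variable j. *)
Definition jac (R : realType) (m alpha omega phi gamma k : R) : 'M[R]_3 :=
  \matrix_(i < 3, j < 3)
    nth 0 (nth [::]
      [:: [:: 0; 1; 0];
          [:: - (m^-1 * (k * cos phi)); - m^-1; - (m^-1 * sin phi)];
          [:: - (alpha * sin phi); 0; -1]] i) j.

(* Eigenvalues (with multiplicity) = roots of the characteristic polynomial
   of the matrix viewed over the complex numbers R[i]. *)
Definition cmx (R : realType) (A : 'M[R]_3) : 'M[R[i]]_3 :=
  map_mx (real_complex R) A.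

Definition real_and_cpair_negre (R : realType) (P : R -> Prop) (A : 'M[R]_3) :=
  exists (r : R) (z : R[i]),
    P r /\ Im z != 0 /\ Re z < 0 /\
    char_poly (cmx A) =
      ('X - (real_complex R r)%:P) * ('X - z%:P) * ('X - (conjc z)%:P).

Definition three_real_eigs (R : realType) (Pa Pb Pc : R -> Prop) (A : 'M[R]_3) :=
  exists a b c : R, Pa a /\ Pb b /\ Pc c /\
    char_poly (cmx A) =
      ('X - (real_complex R a)%:P) * ('X - (real_complex R b)%:P)
        * ('X - (real_complex R c)%:P).

Definition negR (R : realType) (x : R) : Prop := x < 0.
Definition posR (R : realType) (x : R) : Prop := 0 < x.

(* The two boundary curves: for the parameter x (= u in part 1, = v in part 2),
   y = x - (m+1 +/- S)(S -/+ 2(m+1))^2/(54 m^2), S = sqrt(4(m+1)^2 - 6m(x+2)). *)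
Definition Sroot (R : realType) (m x : R) : R :=
  Num.sqrt (4 * (m + 1) ^+ 2 - 6 * m * (x + 2)).

Definition curve1 (R : realType) (m x : R) : R :=
  x - (m + 1 + Sroot m x) * (Sroot m x - 2 * (m + 1)) ^+ 2 / (54 * m ^+ 2).

Definition curve2 (R : realType) (m x : R) : R :=
  x - (m + 1 - Sroot m x) * (Sroot m x + 2 * (m + 1)) ^+ 2 / (54 * m ^+ 2).

Definition ubound (R : realType) (m : R) : R := 2 * (m ^+ 2 - m + 1) / (3 * m).

Definition between_curves (R : realType) (m x y : R) : Prop :=
  (curve1 m x <= y <= curve2 m x) \/ (curve2 m x <= y <= curve1 m x).

Definition Gamma1 (R : realType) (m u v : R) : Prop :=
  0 <= v /\ v <= u /\ u <= ubound m /\ between_curves m u v.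

Definition Gamma2 (R : realType) (m u v : R) : Prop :=
  0 <= v /\ v <= u /\ v <= ubound m /\ between_curves m v u.

From HB Require Import structures.
From mathcomp Require Import all_boot all_order all_algebra.
From mathcomp Require Import reals trigo.
From mathcomp Require Import complex.
From mathcomp Require Import ring lra.
Import Order.TTheory GRing.Theory Num.Theory.
Set Implicit Arguments.
Unset Strict Implicit.
Unset Printing Implicit Defensive.

Local Open Scope ring_scope.

(* At an equilibrium (phi, 0, k) the characteristic polynomial of the Jacobian is
   X^3 + a X^2 + b X + c with a = 1 + 1/m, b = (1 + x/2)/m, c = (x - y)/(2m), where
   (x, y) = (2 k cos phi, 2 alpha sin^2 phi) is (u, v) at P1, P3 and (v, u) at P2, P4.
   At P1, P3 we have a, c > 0 and ab > c (Routh-Hurwitz), so there is a negative real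
   root r and the cofactor X^2 + B X + C of X - r has B, C > 0; at P2, P4 we have
   c < 0, hence a positive real root, and again B, C > 0.  The cubic discriminant is
   (B^2 - 4C)(r^2 + B r + C)^2, so it has the sign of the discriminant of the
   quadratic factor; up to the factor -4m^2/27 it is also the product
   (y - curve1 x)(y - curve2 x), which is nonpositive exactly between the curves.
   The bound x <= 2(m^2 - m + 1)/(3m) is a^2 >= 3b, which a nonnegative cubic
   discriminant forces. *)

Definition quadratic {K : nzRingType} (B C : K) : {poly K} :=
  'X^2 + B%:P * 'X + C%:P.

Definition cubic {K : nzRingType} (a b c : K) : {poly K} :=
  'X^3 + a%:P * 'X^2 + b%:P * 'X + c%:P.

Definition cubic_disc {K : nzRingType} (a b c : K) : K :=
  a ^+ 2 * b ^+ 2 - 4 * b ^+ 3 - 4 * a ^+ 3 * c - 27 * c ^+ 2 + 18 * a * b * c.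

Lemma horner_quadratic (K : comNzRingType) (B C x : K) :
  (quadratic B C).[x] = x ^+ 2 + B * x + C.
Proof. by rewrite /quadratic !hornerE. Qed.

Lemma horner_cubic (K : comNzRingType) (a b c x : K) :
  (cubic a b c).[x] = x ^+ 3 + a * x ^+ 2 + b * x + c.
Proof. by rewrite /cubic !hornerE. Qed.

Lemma XsubC_mul_XsubC (K : comNzRingType) (x y : K) :
  ('X - x%:P) * ('X - y%:P) = quadratic (- (x + y)) (x * y).
Proof. by rewrite /quadratic polyCN polyCD polyCM; ring. Qed.

Lemma XsubC_mul_quadratic (K : comNzRingType) (r B C : K) :
  ('X - r%:P) * quadratic B C = cubic (B - r) (C - r * B) (- (r * C)).
Proof. by rewrite /quadratic /cubic !(polyCN, polyCD, polyCM); ring. Qed.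

Lemma map_quadratic (K L : nzRingType) (f : {rmorphism K -> L}) (B C : K) :
  map_poly f (quadratic B C) = quadratic (f B) (f C).
Proof.
by rewrite /quadratic rmorphD rmorphD rmorphM /= !map_polyC map_polyXn map_polyX.
Qed.

Lemma root_cubic_factor (K : comNzRingType) (a b c r : K) :
  root (cubic a b c) r ->
  exists B C, [/\ a = B - r, b = C - r * B & c = - (r * C)].
Proof.
move=> /rootP; rewrite horner_cubic => root_r.
exists (a + r), (b + r * (a + r)); split; [ring | ring |].
by apply/eqP; rewrite -subr_eq0 -root_r; apply/eqP; ring.
Qed.

Lemma cubic_disc_XsubC_mul_quadratic (K : comNzRingType) (r B C : K) :
  cubic_disc (B - r) (C - r * B) (- (r * C)) =
  (B ^+ 2 - 4 * C) * (quadratic B C).[r] ^+ 2.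
Proof. by rewrite horner_quadratic /cubic_disc; ring. Qed.

Lemma cubic_disc_depressed (K : comNzRingType) (a b c : K) :
  27 * cubic_disc a b c =
  - 4 * (3 * b - a ^+ 2) ^+ 3 - (2 * a ^+ 3 - 9 * a * b + 27 * c) ^+ 2.
Proof. by rewrite /cubic_disc; ring. Qed.

Lemma cubic_disc_XsubC_mul_quadratic_ge0 (R : realFieldType) (r B C : R) :
  (0 <= cubic_disc (B - r) (C - r * B) (- (r * C))) = (0 <= B ^+ 2 - 4 * C).
Proof.
rewrite cubic_disc_XsubC_mul_quadratic horner_quadratic.
have [D_ge0|D_lt0] := leP 0 (B ^+ 2 - 4 * C).
  by rewrite mulr_ge0 ?sqr_ge0.
have q_gt0 : 0 < r ^+ 2 + B * r + C.
  have -> : r ^+ 2 + B * r + C = (r + B / 2) ^+ 2 + (4 * C - B ^+ 2) / 4 by field.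
  by apply: ltr_wpDl; [exact: sqr_ge0 | lra].
by apply/negbTE; rewrite -ltNge pmulr_llt0 ?exprn_gt0.
Qed.

Lemma cubic_disc_ge0_sqr (R : realFieldType) (a b c : R) :
  0 <= cubic_disc a b c -> 3 * b <= a ^+ 2.
Proof.
move=> disc_ge0; rewrite leNgt; apply/negP => lt_a2.
have : 0 < (3 * b - a ^+ 2) ^+ 3 by rewrite exprn_gt0 // subr_gt0.
have := sqr_ge0 (2 * a ^+ 3 - 9 * a * b + 27 * c).
have := cubic_disc_depressed a b c.
lra.
Qed.

Lemma hurwitz_quadratic_factor (R : realFieldType) (r B C : R) :
  0 < B - r -> 0 < - (r * C) -> - (r * C) < (B - r) * (C - r * B) -> 0 < B.
Proof.
move=> a_gt0 c_gt0 c_lt_ab.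
have b_gt0 : 0 < C - r * B by rewrite -(pmulr_rgt0 _ a_gt0); lra.
have : (B - r) * (C - r * B) + r * C = B * (C - r * B + r ^+ 2) by ring.
have : 0 < C - r * B + r ^+ 2 by have := sqr_ge0 r; lra.
by nra.
Qed.

Section RealClosed.
Variable R : rcfType.
Implicit Types a b c r B C t : R.

Lemma quadratic_split B C : 0 <= B ^+ 2 - 4 * C ->
  quadratic B C = ('X - ((- B + Num.sqrt (B ^+ 2 - 4 * C)) / 2)%:P) *
                  ('X - ((- B - Num.sqrt (B ^+ 2 - 4 * C)) / 2)%:P).
Proof.
move=> /sqr_sqrtr; set t := Num.sqrt _ => t2.
rewrite XsubC_mul_XsubC; congr quadratic; first by field.
have -> : C = (B ^+ 2 - t ^+ 2) / 4 by rewrite t2; field.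
by field.
Qed.

Lemma map_quadratic_complex_split B C t : t ^+ 2 = 4 * C - B ^+ 2 ->
  let z := (- B / 2 +i* (t / 2))%C in
  map_poly (real_complex R) (quadratic B C) = ('X - z%:P) * ('X - (conjc z)%:P).
Proof.
move=> t2 z; rewrite map_quadratic XsubC_mul_XsubC; congr quadratic.
  by apply/eqP; rewrite eq_complex /=; apply/andP; split; apply/eqP; field.
apply/eqP; rewrite eq_complex /=; apply/andP; split; apply/eqP; last by field.
have -> : C = (B ^+ 2 + t ^+ 2) / 4 by rewrite t2; field.
by field.
Qed.

Lemma cubic_root_lt0 a b c : 0 <= a -> 0 <= b -> 0 < c ->
  exists2 r, r < 0 & root (cubic a b c) r.
Proof.
move=> a_ge0 b_ge0 c_gt0; set M := 1 + a + c.
have M_ge1 : 1 <= M by rewrite /M; lra.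
have [r /andP[_ r_le0] root_r] : exists2 r, - M <= r <= 0 & root (cubic a b c) r.
  apply: poly_ivt; first lra.
  rewrite !horner_cubic !expr0n /= !mulr0 !addr0 add0r (ltW c_gt0) andbT.
  have -> : (- M) ^+ 3 + a * (- M) ^+ 2 + b * - M + c =
            - M ^+ 2 * (1 + c) - b * M + c by rewrite /M; ring.
  have : 1 <= M ^+ 2 by rewrite expr_ge1 // (le_trans ler01).
  have : 0 <= b * M by rewrite mulr_ge0 //; lra.
  nra.
exists r => //; rewrite lt_def r_le0 andbT; apply: contraTneq root_r => <-.
by rewrite rootE horner_cubic !expr0n /= !mulr0 !add0r gt_eqF.
Qed.

Lemma cubic_root_gt0 a b c : 0 <= a -> 0 <= b -> c < 0 ->
  exists2 r, 0 < r & root (cubic a b c) r.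
Proof.
move=> a_ge0 b_ge0 c_lt0; set M := 1 - c.
have M_ge1 : 1 <= M by rewrite /M; lra.
have [r /andP[r_ge0 _] root_r] : exists2 r, 0 <= r <= M & root (cubic a b c) r.
  apply: poly_ivt; first lra.
  rewrite !horner_cubic !expr0n /= !mulr0 !add0r (ltW c_lt0) /=.
  have : M <= M ^+ 3 by rewrite -[leLHS]expr1 ler_weXn2l.
  have : 0 <= a * M ^+ 2 by rewrite mulr_ge0 ?sqr_ge0.
  have : 0 <= b * M by rewrite mulr_ge0 //; lra.
  by rewrite /M; lra.
exists r => //; rewrite lt_def r_ge0 andbT; apply: contraTneq root_r => ->.
by rewrite rootE horner_cubic !expr0n /= !mulr0 !add0r lt_eqF.
Qed.

End RealClosed.

Lemma eigs_of_XsubC_mul_quadratic (R : realType) (P : R -> Prop) (A : 'M[R]_3)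
    (r B C : R) :
  char_poly A = ('X - r%:P) * quadratic B C -> P r -> 0 < B -> 0 < C ->
  (B ^+ 2 - 4 * C < 0 -> real_and_cpair_negre P A) /\
  (0 <= B ^+ 2 - 4 * C -> three_real_eigs P (@negR R) (@negR R) A).
Proof.
move=> charA Pr B_gt0 C_gt0; split => [D_lt0 | D_ge0].
  set t := Num.sqrt (4 * C - B ^+ 2).
  have t2 : t ^+ 2 = 4 * C - B ^+ 2 by rewrite sqr_sqrtr //; lra.
  have t_gt0 : 0 < t by rewrite sqrtr_gt0; lra.
  exists r, (- B / 2 +i* (t / 2))%C; split=> //; split; [|split].
  - by rewrite -complexIm /= eq_complex /= negb_and; apply/orP; left; apply/eqP; lra.
  - by rewrite -complexRe ltcE /= eqxx /=; lra.
  by rewrite /cmx -map_char_poly charA rmorphM /= map_polyXsubC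
    (map_quadratic_complex_split t2) mulrA.
set t := Num.sqrt (B ^+ 2 - 4 * C).
have t_lt_B : t < B.
  by rewrite -(ger0_norm (ltW B_gt0)) -sqrtr_sqr ltr_sqrt ?exprn_gt0 //; lra.
have t_ge0 : 0 <= t := sqrtr_ge0 _.
exists r, ((- B + t) / 2), ((- B - t) / 2); rewrite /negR.
split=> //; split; [lra | split; [lra |]].
by rewrite /cmx -map_char_poly charA (quadratic_split D_ge0) 2!rmorphM /=
  !map_polyXsubC mulrA.
Qed.

Lemma hurwitz_cubic_eigs (R : realType) (A : 'M[R]_3) (a b c : R) :
  0 < a -> 0 < c -> c < a * b -> char_poly A = cubic a b c ->
  (cubic_disc a b c < 0 -> real_and_cpair_negre (@negR R) A) /\
  (0 <= cubic_disc a b c -> three_real_eigs (@negR R) (@negR R) (@negR R) A).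
Proof.
move=> a_gt0 c_gt0 c_lt_ab charA.
have b_gt0 : 0 < b by rewrite -(pmulr_rgt0 _ a_gt0); lra.
have [r r_lt0 /root_cubic_factor [B [C [da db dc]]]] :=
  cubic_root_lt0 (ltW a_gt0) (ltW b_gt0) c_gt0.
subst a b c; rewrite ltNge cubic_disc_XsubC_mul_quadratic_ge0 -ltNge.
rewrite -XsubC_mul_quadratic in charA.
apply: (eigs_of_XsubC_mul_quadratic charA r_lt0).
  exact: hurwitz_quadratic_factor a_gt0 c_gt0 c_lt_ab.
by nra.
Qed.

Lemma saddle_cubic_eigs (R : realType) (A : 'M[R]_3) (a b c : R) :
  0 <= a -> 0 <= b -> c < 0 -> char_poly A = cubic a b c ->
  (cubic_disc a b c < 0 -> real_and_cpair_negre (@posR R) A) /\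
  (0 <= cubic_disc a b c -> three_real_eigs (@posR R) (@negR R) (@negR R) A).
Proof.
move=> a_ge0 b_ge0 c_lt0 charA.
have [r r_gt0 /root_cubic_factor [B [C [da db dc]]]] := cubic_root_gt0 a_ge0 b_ge0 c_lt0.
subst a b c; rewrite ltNge cubic_disc_XsubC_mul_quadratic_ge0 -ltNge.
rewrite -XsubC_mul_quadratic in charA.
by apply: (eigs_of_XsubC_mul_quadratic charA r_gt0); nra.
Qed.

Lemma char_poly_jac_equilibrium (R : realType) (m alpha omega phi gamma k x y : R) :
  k * cos phi = x / 2 -> alpha * sin phi ^+ 2 = y / 2 ->
  char_poly (jac m alpha omega phi gamma k) =
  cubic (1 + m^-1) (m^-1 * (1 + x / 2)) (m^-1 * ((x - y) / 2)).
Proof.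
move=> kcos alpha_sin2.
transitivity (cubic (1 + m^-1) (m^-1 * (1 + k * cos phi))
                    (m^-1 * (k * cos phi - alpha * sin phi ^+ 2))); last first.
  by rewrite kcos alpha_sin2; congr cubic; ring.
rewrite /char_poly (expand_det_row _ ord0) !big_ord_recr big_ord0 /= add0r /cofactor.
rewrite !(expand_det_row _ ord0) !big_ord_recr big_ord0 /= !add0r /cofactor.
rewrite !det_mx11 !mxE /= !big_ord0 !add0r /cubic.
by rewrite !(polyCN, polyCD, polyCM, polyC0, polyC1) /= expr2; ring.
Qed.

Lemma between_curvesP (R : realType) (m x y : R) :
  between_curves m x y <-> (y - curve1 m x) * (y - curve2 m x) <= 0.
Proof.
rewrite /between_curves; split; first by case=> /andP[]; nra.
move=> le0; case: (lerP (curve1 m x) (curve2 m x)) => c12.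
  by left; apply/andP; split; nra.
by right; apply/andP; split; nra.
Qed.

Section Equilibrium.
Variables (R : realType) (m : R).
Hypothesis m_gt0 : 0 < m.
Variables x y : R.

Local Notation a := (1 + m^-1).
Local Notation b := (m^-1 * (1 + x / 2)).
Local Notation c := (m^-1 * ((x - y) / 2)).

Lemma le_ubound : (x <= ubound m) = (3 * b <= a ^+ 2).
Proof.
have m_neq0 : m != 0 by rewrite gt_eqF.
rewrite /ubound ler_pdivlMr ?mulr_gt0 // -(ler_pM2l (exprn_gt0 2 m_gt0) (3 * b)).
have -> : m ^+ 2 * (3 * b) = 3 * m + 3 * m * x / 2 by field.
have -> : m ^+ 2 * a ^+ 2 = (m + 1) ^+ 2 by field.
by apply/idP/idP; lra.
Qed.

(* Expressing x through S = [Sroot m x] turns the claim into a rational identity in S. *)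
Lemma curves_disc : x <= ubound m ->
  (y - curve1 m x) * (y - curve2 m x) = - (4 * m ^+ 2 / 27) * cubic_disc a b c.
Proof.
move=> x_le; have m_neq0 : m != 0 by rewrite gt_eqF.
have S_arg_ge0 : 0 <= 4 * (m + 1) ^+ 2 - 6 * m * (x + 2).
  move: x_le; rewrite le_ubound.
  have -> : 4 * (m + 1) ^+ 2 - 6 * m * (x + 2) = 4 * m ^+ 2 * (a ^+ 2 - 3 * b) by field.
  by move=> le3b; apply: mulr_ge0; [rewrite mulr_ge0 ?ler0n ?sqr_ge0 | rewrite subr_ge0].
rewrite /curve1 /curve2; set S := Sroot m x.
have S2 : S ^+ 2 = 4 * (m + 1) ^+ 2 - 6 * m * (x + 2) by rewrite sqr_sqrtr.
have -> : x = (4 * (m + 1) ^+ 2 - S ^+ 2 - 12 * m) / (6 * m) by rewrite S2; field.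
by rewrite /cubic_disc; field.
Qed.

Lemma between_curves_disc :
  x <= ubound m /\ between_curves m x y <-> 0 <= cubic_disc a b c.
Proof.
have k_gt0 : 0 < 4 * m ^+ 2 / 27 by rewrite divr_gt0 ?mulr_gt0 ?exprn_gt0.
split=> [[x_le /between_curvesP] | disc_ge0].
  by rewrite curves_disc // mulNr oppr_le0 pmulr_rge0.
have x_le : x <= ubound m by rewrite le_ubound; exact: cubic_disc_ge0_sqr disc_ge0.
split=> //; apply/between_curvesP.
by rewrite curves_disc // mulNr oppr_le0 pmulr_rge0.
Qed.

Lemma stable_equilibrium_eigs (A : 'M[R]_3) : 0 <= y < x ->
  char_poly A = cubic a b c ->
  (~ Gamma1 m x y -> real_and_cpair_negre (@negR R) A) /\
  (Gamma1 m x y -> three_real_eigs (@negR R) (@negR R) (@negR R) A).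
Proof.
move=> /andP[y_ge0 y_lt_x] charA.
have minv_gt0 : 0 < m^-1 by rewrite invr_gt0.
have Gamma1E : Gamma1 m x y <-> 0 <= cubic_disc a b c.
  rewrite -between_curves_disc /Gamma1.
  by split=> [[_ [_ G]] // | G]; split=> //; split=> //; exact: ltW.
have [||| cpair real3] := hurwitz_cubic_eigs _ _ _ charA.
- by lra.
- by rewrite mulr_gt0 //; lra.
- rewrite -subr_gt0.
  have -> : a * b - c = m^-1 * (1 + y / 2 + m^-1 * (1 + x / 2)) by ring.
  by rewrite mulr_gt0 //; nra.
split=> [notG | /Gamma1E]; last exact: real3.
by apply: cpair; rewrite ltNge; apply/negP => /Gamma1E.
Qed.

Lemma saddle_equilibrium_eigs (A : 'M[R]_3) : 0 <= x < y ->
  char_poly A = cubic a b c ->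
  (~ Gamma2 m y x -> real_and_cpair_negre (@posR R) A) /\
  (Gamma2 m y x -> three_real_eigs (@posR R) (@negR R) (@negR R) A).
Proof.
move=> /andP[x_ge0 x_lt_y] charA.
have minv_gt0 : 0 < m^-1 by rewrite invr_gt0.
have Gamma2E : Gamma2 m y x <-> 0 <= cubic_disc a b c.
  rewrite -between_curves_disc /Gamma2.
  by split=> [[_ [_ G]] // | G]; split=> //; split=> //; exact: ltW.
have [||| cpair real3] := saddle_cubic_eigs _ _ _ charA.
- by lra.
- by rewrite mulr_ge0 ?(ltW minv_gt0) //; lra.
- by rewrite pmulr_rlt0 //; lra.
split=> [notG | /Gamma2E]; last exact: real3.
by apply: cpair; rewrite ltNge; apply/negP => /Gamma2E.
Qed.

End Equilibrium.

Lemma cos_half_asin_sqr (R : realType) (s : R) : -1 <= s <= 1 ->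
  cos (asin s / 2) ^+ 2 = (1 + Num.sqrt (1 - s ^+ 2)) / 2.
Proof.
move=> s_bnd; rewrite -cos_asin //; set t := asin s / 2.
have -> : asin s = t *+ 2 by rewrite /t mulr2n; field.
by rewrite cos_mulr2n; field.
Qed.

Lemma sin_half_asin_sqr (R : realType) (s : R) : -1 <= s <= 1 ->
  sin (asin s / 2) ^+ 2 = (1 - Num.sqrt (1 - s ^+ 2)) / 2.
Proof. by move=> s_bnd; rewrite sin2cos2 cos_half_asin_sqr //; field. Qed.

Lemma mulr_sqrt1B_sqr_div (R : rcfType) (a w : R) : 0 < a ->
  a * Num.sqrt (1 - (w / a) ^+ 2) = Num.sqrt (a ^+ 2 - w ^+ 2).
Proof.
move=> a_gt0; have -> : a ^+ 2 - w ^+ 2 = a ^+ 2 * (1 - (w / a) ^+ 2).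
  by field; rewrite gt_eqF.
by rewrite sqrtrM ?sqr_ge0 // sqrtr_sqr ger0_norm // ltW.
Qed.

Lemma equilibrium_uv (R : realType) (alpha omega : R) :
  0 < alpha -> 0 <= omega -> 2 * omega < alpha ->
  let theta := asin (2 * omega / alpha) / 2 in
  let u := alpha + Num.sqrt (alpha ^+ 2 - 4 * omega ^+ 2) in
  let v := alpha - Num.sqrt (alpha ^+ 2 - 4 * omega ^+ 2) in
  [/\ 0 <= v < u, alpha * cos theta ^+ 2 = u / 2 & alpha * sin theta ^+ 2 = v / 2].
Proof.
move=> alpha_gt0 omega_ge0 omega_lt theta u v.
have s_bnd : -1 <= 2 * omega / alpha <= 1.
  by rewrite ler_pdivlMr ?ler_pdivrMr //; apply/andP; split; lra.
have sqrtE : alpha * Num.sqrt (1 - (2 * omega / alpha) ^+ 2) =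
             Num.sqrt (alpha ^+ 2 - 4 * omega ^+ 2).
  by rewrite mulr_sqrt1B_sqr_div // exprMn -natrX.
set s := Num.sqrt (alpha ^+ 2 - 4 * omega ^+ 2) in sqrtE u v *.
have s_gt0 : 0 < s by rewrite sqrtr_gt0; nra.
have s_le : s <= alpha.
  rewrite -(ger0_norm (ltW alpha_gt0)) -sqrtr_sqr; apply: ler_wsqrtr; nra.
split; first (apply/andP; split; rewrite /u /v; lra).
  by rewrite cos_half_asin_sqr // /u -sqrtE; ring.
by rewrite sin_half_asin_sqr // /v -sqrtE; ring.
Qed.

Theorem proposition1 (R : realType) (m alpha omega : R) :
  0 < m -> 0 < alpha -> 0 <= omega -> 2 * omega < alpha ->
  let theta := asin (2 * omega / alpha) / 2 in
  let u := alpha + Num.sqrt (alpha ^+ 2 - 4 * omega ^+ 2) in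
  let v := alpha - Num.sqrt (alpha ^+ 2 - 4 * omega ^+ 2) in
  let J1 := jac m alpha omega theta 0 (alpha * cos theta) in
  let J2 := jac m alpha omega (pi / 2 - theta) 0 (alpha * sin theta) in
  let J3 := jac m alpha omega (- pi + theta) 0 (- (alpha * cos theta)) in
  let J4 := jac m alpha omega (- (pi / 2) - theta) 0 (- (alpha * sin theta)) in
  ((~ Gamma1 m u v ->
      real_and_cpair_negre (@negR R) J1 /\ real_and_cpair_negre (@negR R) J3) /\
   (Gamma1 m u v ->
      three_real_eigs (@negR R) (@negR R) (@negR R) J1 /\
      three_real_eigs (@negR R) (@negR R) (@negR R) J3)) /\
  ((~ Gamma2 m u v ->
      real_and_cpair_negre (@posR R) J2 /\ real_and_cpair_negre (@posR R) J4) /\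
   (Gamma2 m u v ->
      three_real_eigs (@posR R) (@negR R) (@negR R) J2 /\
      three_real_eigs (@posR R) (@negR R) (@negR R) J4)).
Proof.
move=> m_gt0 alpha_gt0 omega_ge0 omega_lt theta u v J1 J2 J3 J4.
have [vu ucos vsin] := equilibrium_uv alpha_gt0 omega_ge0 omega_lt.
set pu := cubic (1 + m^-1) (m^-1 * (1 + u / 2)) (m^-1 * ((u - v) / 2)).
set pv := cubic (1 + m^-1) (m^-1 * (1 + v / 2)) (m^-1 * ((v - u) / 2)).
have [charJ1 charJ3 charJ2 charJ4] : [/\ char_poly J1 = pu, char_poly J3 = pu,
    char_poly J2 = pv & char_poly J4 = pv].
  by split; apply: char_poly_jac_equilibrium; rewrite -?ucos -?vsin
    ?(cosD, sinD, cosB, sinB, cosN, sinN, cospi, sinpi, cos_pihalf, sin_pihalf);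
    ring.
have [J1c J1r] := stable_equilibrium_eigs m_gt0 vu charJ1.
have [J3c J3r] := stable_equilibrium_eigs m_gt0 vu charJ3.
have [J2c J2r] := saddle_equilibrium_eigs m_gt0 vu charJ2.
have [J4c J4r] := saddle_equilibrium_eigs m_gt0 vu charJ4.
by split; split=> G; split;
  [exact: J1c | exact: J3c | exact: J1r | exact: J3r
  | exact: J2c | exact: J4c | exact: J2r | exact: J4r].
Qed.
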